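(* There exists a PBD$(53,\{3,5\})$ of dimension three.
   Context: For a positive integer $v$ and $K \subseteq \{2,3,4,\dots\}$, a pairwise balanced design PBD$(v,K)$ is a pair $(X,\mathcal{B})$ where $X$ is a $v$-set of points and $\mathcal{B}$ is a family of subsets of $X$ (blocks), each of size in $K$, such that any two distinct points of $X$ lie together in exactly one block. A flat (subdesign) is a pair $(Y,\mathcal{B}_Y)$ with $Y \subseteq X$ and $\mathcal{B}_Y = \{B \in \mathcal{B} : B \subseteq Y\}$ such that any two distinct points of $Y$ lie together in exactly one block of $\mathcal{B}_Y$; it is proper if $Y \ne X$. The dimension of the PBD is the maximum integer $d$ such that every set of $d$ points is contained in a proper flat. *)

From mathcomp Require Import all_boot.
Set Implicit Arguments. Unset Strict Implicit. Unset Printing Implicit Defensive.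

Section PBD.
Variable T : finType.

Definition is_PBD (K : pred nat) (B : {set {set T}}) : Prop :=
  (forall b, b \in B -> K #|b|) /\
  (forall x y : T, x != y ->
     #|[set b in B | (x \in b) && (y \in b)]| = 1).

Definition is_flat (B : {set {set T}}) (Y : {set T}) : Prop :=
  forall x y : T, x \in Y -> y \in Y -> x != y ->
    #|[set b in B | (b \subset Y) && ((x \in b) && (y \in b))]| = 1.

Definition is_proper_flat (B : {set {set T}}) (Y : {set T}) : Prop :=
  is_flat B Y /\ Y != [set: T].

Definition all_dsets_in_proper_flat (B : {set {set T}}) (d : nat) : Prop :=
  forall S : {set T}, #|S| = d ->
    exists Y : {set T}, is_proper_flat B Y /\ S \subset Y.

Definition has_dimension (B : {set {set T}}) (d : nat) : Prop :=
  d <= #|T| /\ all_dsets_in_proper_flat B d /\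
  (forall d', d' <= #|T| -> all_dsets_in_proper_flat B d' -> d' <= d).

End PBD.

From mathcomp Require Import all_boot.
Set Implicit Arguments. Unset Strict Implicit. Unset Printing Implicit Defensive.

(* The design is the projective space PG(3,4) with the symmetric difference of
   two planes removed: its 53 points are the 5 points of the common line and
   the 48 points off both planes.  The blocks are the traces of lines: the
   common line and every line through one of its points lying in neither
   plane keep 5 points, every other line with two surviving points keeps 3. *)

Section FlatsOfLinearSpaces.
Variables (T : finType) (B : {set {set T}}).

Hypothesis pair_axiom : forall x y : T, x != y ->
  #|[set b in B | (x \in b) && (y \in b)]| = 1.

Lemma unique_block (x y : T) : x != y ->
  exists b, forall b', (b' \in B) && ((x \in b') && (y \in b')) = (b' == b).
Proof.
move=> xy; have /cards1P [b Eb] := introT eqP (pair_axiom xy).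
by exists b => b'; move/setP: Eb => /(_ b'); rewrite !inE.
Qed.

Definition block_closed (Y : {set T}) : Prop :=
  forall b x y, b \in B -> x \in b -> y \in b -> x != y ->
    x \in Y -> y \in Y -> b \subset Y.

Lemma flat_block_closed (Y : {set T}) : is_flat B Y -> block_closed Y.
Proof.
move=> flatY b x y bB xb yb xy xY yY; have [b0 Eb0] := unique_block xy.
have : 0 < #|[set b in B | (b \subset Y) && ((x \in b) && (y \in b))]|.
  by rewrite flatY.
case/card_gt0P => b'; rewrite inE => /and3P [b'B b'Y xyb'].
have /eqP -> : b == b0 by rewrite -Eb0 bB xb yb.
by have /eqP <- : b' == b0 by rewrite -Eb0 b'B xyb'.
Qed.

Lemma block_closed_flat (Y : {set T}) : block_closed Y -> is_flat B Y.
Proof.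
move=> closedY x y xY yY xy; have [b Eb] := unique_block xy.
suff -> : [set b' in B | (b' \subset Y) && ((x \in b') && (y \in b'))] = [set b].
  exact: cards1.
apply/setP => b'; rewrite !inE andbCA Eb andbC.
have [-> | _] //= := eqVneq b' b.
have /and3P [bB xb yb] : [&& b \in B, x \in b & y \in b] by rewrite Eb.
exact: (closedY _ _ _ bB xb yb xy xY yY).
Qed.

(* Two points of a 3-set span a block; adding the third point, the 3-set lies
   in a proper flat as soon as every block plus any point does. *)
Lemma three_sets_in_proper_flats :
  (forall b z, b \in B -> exists Y, is_proper_flat B Y /\ z |: b \subset Y) ->
  all_dsets_in_proper_flat B 3.
Proof.
move=> cover S; case: cards_eqP => -[|x [|y [|z []]]] //= xyz _.
have xy : x != y by move: xyz; rewrite !inE negb_or -andbA => /and3P [].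
have [b Eb] := unique_block xy.
have /and3P [bB xb yb] : (b \in B) && ((x \in b) && (y \in b)) by rewrite Eb.
have [Y [properY zbY]] := cover b z bB.
exists Y; split => //; apply: subset_trans zbY; apply/subsetP => w.
by rewrite !inE => /or3P [] /eqP ->; rewrite ?eqxx ?xb ?yb ?orbT.
Qed.

End FlatsOfLinearSpaces.

Lemma extend_to_card (T : finType) (A : {set T}) n :
  #|A| <= n -> n <= #|T| -> exists S : {set T}, #|S| = n /\ A \subset S.
Proof.
elim: n => [|n IH] An nT; first by exists A; split => //; apply/eqP; rewrite -leqn0.
move: An; rewrite leq_eqVlt => /orP [/eqP <- | An]; first by exists A.
have [S [cardS AS]] := IH An (ltnW nT).
have /card_gt0P [x] : 0 < #|~: S| by rewrite cardsCs setCK subn_gt0 cardS.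
rewrite inE => xS; exists (x |: S); split; first by rewrite cardsU1 xS cardS.
exact: subset_trans AS (subsetUr _ _).
Qed.

(* Dimension d is certified by: every d-set lies in a proper flat, and some
   (d+1)-set lies in no proper flat, hence neither does any larger set. *)
Lemma has_dimension_of (T : finType) (B : {set {set T}}) d (S0 : {set T}) :
  d <= #|T| -> all_dsets_in_proper_flat B d -> #|S0| = d.+1 ->
  (forall Y, is_flat B Y -> S0 \subset Y -> Y = [set: T]) ->
  has_dimension B d.
Proof.
move=> dT dsets cardS0 spanS0; do 2!split => //.
move=> d' d'T d'sets; rewrite leqNgt; apply/negP => dd'.
have S0d' : #|S0| <= d' by rewrite cardS0.
have [S [cardS S0S]] := extend_to_card S0d' d'T.
have [Y [[flatY /eqP properY] SY]] := d'sets S cardS.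
exact/properY/spanS0/(subset_trans S0S SY).
Qed.

Section ListDesigns.
Variables (n : nat) (L : seq (seq nat)).

Definition points (s : seq nat) : {set 'I_n} := [set x : 'I_n | val x \in s].

Definition bounded (s : seq nat) : bool := all (fun i => i < n) s.

Lemma card_points (s : seq nat) : uniq s -> bounded s -> #|points s| = size s.
Proof.
move=> uniq_s bounded_s; rewrite cardE -(size_map val); apply/perm_size.
apply: uniq_perm => // [|i]; first by rewrite (map_inj_uniq val_inj) enum_uniq.
apply/mapP/idP => [[x] | si]; first by rewrite mem_enum inE => xs ->.
by exists (Ordinal (allP bounded_s i si)); rewrite ?mem_enum ?inE.
Qed.

Lemma ord_in_range (x : 'I_n) : val x \in iota 0 n.
Proof. by rewrite mem_iota ltn_ord. Qed.

Definition design : {set {set 'I_n}} := [set b | has (fun s => b == points s) L].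

Lemma designP (b : {set 'I_n}) :
  reflect (exists2 s, s \in L & b = points s) (b \in design).
Proof. by rewrite inE; apply: (iffP hasP) => -[s sL /eqP]; exists s. Qed.

Lemma points_design (s : seq nat) : s \in L -> points s \in design.
Proof. by move=> sL; apply/designP; exists s. Qed.

Definition blocks_ok (K : pred nat) : bool :=
  all (fun s => [&& uniq s, bounded s & K (size s)]) L.

Definition pairs_ok : bool :=
  all (fun i => all (fun j =>
    (i != j) ==> (count (fun s => (i \in s) && (j \in s)) L == 1)) (iota 0 n)) (iota 0 n).

Lemma count_eq1P (A : eqType) (P : pred A) (r : seq A) : count P r = 1 ->
  exists a, forall x, (x \in r) && P x = (x == a).
Proof.
rewrite -size_filter; case E: (filter P r) => [|a []] // _.
by exists a => x; rewrite andbC -mem_filter E inE.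
Qed.

Lemma design_pairs : pairs_ok ->
  forall x y : 'I_n, x != y -> #|[set b in design | (x \in b) && (y \in b)]| = 1.
Proof.
move=> pairs x y xy; apply/eqP/cards1P.
have := implyP (allP (allP pairs _ (ord_in_range x)) _ (ord_in_range y)) xy.
move=> /eqP /count_eq1P [s0 Es0].
exists (points s0); apply/setP => b; rewrite in_set1 in_set.
apply/idP/eqP => [/and3P [/designP [s sL ->]] | ->].
  by rewrite !inE => xs ys; have /eqP <- : s == s0 by rewrite -Es0 sL xs ys.
have /and3P [s0L xs0 ys0] : [&& s0 \in L, val x \in s0 & val y \in s0] by rewrite Es0.
by rewrite points_design // !inE xs0 ys0.
Qed.

Lemma design_PBD (K : pred nat) : blocks_ok K -> pairs_ok -> is_PBD K design.
Proof.
move=> blocks pairs; split; last exact: design_pairs.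
move=> b /designP [s sL ->]; have /and3P [uniq_s bounded_s Ks] := allP blocks s sL.
by rewrite card_points.
Qed.

Section Flats.
Hypothesis L_bounded : all bounded L.
Hypothesis L_pairs : pairs_ok.

Definition meets_twice (c s : seq nat) : bool :=
  has (fun i => (i \in c) && has (fun j => (j != i) && (j \in c)) s) s.

Lemma meets_twiceP (c s : seq nat) : bounded s ->
  reflect (exists x y : 'I_n, [/\ x \in points s, y \in points s, x != y,
                                   x \in points c & y \in points c])
          (meets_twice c s).
Proof.
move=> bounded_s; apply: (iffP hasP) => [[i si /andP [ic /hasP [j sj /andP [ji jc]]]] |].
  exists (Ordinal (allP bounded_s i si)), (Ordinal (allP bounded_s j sj)).
  by rewrite !inE /= eq_sym; split.
case=> x [y] [xs ys xy xc yc]; rewrite !inE in xs ys xc yc.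
exists (val x) => //; rewrite xc; apply/hasP; exists (val y) => //.
by rewrite yc andbT eq_sym.
Qed.

Definition closed_list (t : seq nat) : bool :=
  all (fun s => meets_twice t s ==> all (fun i => i \in t) s) L.

Lemma closed_list_flat (t : seq nat) : closed_list t -> is_flat design (points t).
Proof.
move=> closed_t; apply: block_closed_flat; first exact: design_pairs L_pairs.
move=> b x y /designP [s sL ->] xs ys xy xt yt.
have twice : meets_twice t s by apply/(meets_twiceP _ (allP L_bounded s sL)); exists x, y.
have /allP in_t := implyP (allP closed_t s sL) twice.
by apply/subsetP => z; rewrite !inE => /in_t.
Qed.

Definition proper_flat_list (t : seq nat) : bool :=
  closed_list t && has (fun i => i \notin t) (iota 0 n).

Lemma proper_flat_list_flat (t : seq nat) :
  proper_flat_list t -> is_proper_flat design (points t).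
Proof.
case/andP => closed_t /hasP [i]; rewrite mem_iota add0n => i_lt_n i_notin_t.
split; first exact: closed_list_flat.
by apply/eqP => /setP /(_ (Ordinal i_lt_n)); rewrite !inE (negbTE i_notin_t).
Qed.

Definition contains_range (c : seq nat) : bool := all (fun i => i \in c) (iota 0 n).

Definition lists_through (F : seq (seq nat)) (s : seq nat) : seq (seq nat) :=
  [seq t <- F | all (fun i => i \in t) s].

(* Every block together with any point lies in some list of F. *)
Definition covers (F : seq (seq nat)) : bool :=
  all (fun s => contains_range (flatten (lists_through F s))) L.

Lemma design_three_sets (F : seq (seq nat)) :
  all proper_flat_list F -> covers F -> all_dsets_in_proper_flat design 3.
Proof.
move=> flats cover; apply: three_sets_in_proper_flats; first exact: design_pairs.
move=> b z /designP [s sL ->].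
have /flattenP [t] := allP (allP cover s sL) _ (ord_in_range z).
rewrite mem_filter => /andP [/allP st tF] zt.
exists (points t); split; first exact/proper_flat_list_flat/(allP flats).
by apply/subsetP => w; rewrite !inE => /predU1P [-> | /st].
Qed.

Definition span_step (c : seq nat) : seq nat :=
  undup (c ++ flatten [seq s <- L | meets_twice c s]).

Lemma span_step_sub (Y : {set 'I_n}) (c : seq nat) : block_closed design Y ->
  points c \subset Y -> points (span_step c) \subset Y.
Proof.
move=> closedY cY; apply/subsetP => x; rewrite inE mem_undup mem_cat.
case/orP => [xc | /flattenP [s]]; first by apply: (subsetP cY); rewrite inE.
rewrite mem_filter => /andP [twice sL] xs.
have /(meets_twiceP _ (allP L_bounded s sL)) [y [z [ys zs yz yc zc]]] := twice.
have sY := closedY _ _ _ (points_design sL) ys zs yz (subsetP cY _ yc) (subsetP cY _ zc).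
by apply: (subsetP sY); rewrite inE.
Qed.

Lemma spanning_list (k : nat) (c : seq nat) :
  contains_range (iter k span_step c) ->
  forall Y, is_flat design Y -> points c \subset Y -> Y = [set: 'I_n].
Proof.
move=> full Y flatY cY; have closedY := flat_block_closed (design_pairs L_pairs) flatY.
have spanY : points (iter k span_step c) \subset Y.
  by elim: k {full} => //= k IH; exact: span_step_sub.
apply/setP => x; rewrite inE; apply: (subsetP spanY); rewrite inE.
exact: (allP full _ (ord_in_range x)).
Qed.

End Flats.

End ListDesigns.

(* The blocks on the points 0..52; [:: 0; 1; 2; 3; 4] is the common line of
   the two removed planes. *)
Definition blocks53 : seq (seq nat) :=
  [:: [:: 0; 1; 2; 3; 4]; [:: 0; 5; 6; 7; 8]; [:: 0; 9; 10; 11; 12]; [:: 0; 13; 14; 15; 16];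
     [:: 0; 17; 18; 19; 20]; [:: 0; 21; 22; 23; 24]; [:: 0; 25; 26; 27; 28]; [:: 0; 29; 30; 31; 32];
     [:: 0; 33; 34; 35; 36]; [:: 0; 37; 38; 39; 40]; [:: 0; 41; 42; 43; 44]; [:: 0; 45; 46; 47; 48];
     [:: 0; 49; 50; 51; 52]; [:: 1; 5; 9; 13; 17]; [:: 1; 6; 10; 14; 18]; [:: 1; 7; 11; 15; 19];
     [:: 1; 8; 12; 16; 20]; [:: 1; 21; 25; 29; 33]; [:: 1; 22; 26; 30; 34]; [:: 1; 23; 27; 31; 35];
     [:: 1; 24; 28; 32; 36]; [:: 1; 37; 41; 45; 49]; [:: 1; 38; 42; 46; 50]; [:: 1; 39; 43; 47; 51];
     [:: 1; 40; 44; 48; 52]; [:: 2; 5; 10; 15; 20]; [:: 2; 6; 9; 16; 19]; [:: 2; 7; 12; 13; 18];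
     [:: 2; 8; 11; 14; 17]; [:: 2; 21; 26; 31; 36]; [:: 2; 22; 25; 32; 35]; [:: 2; 23; 28; 29; 34];
     [:: 2; 24; 27; 30; 33]; [:: 2; 37; 42; 47; 52]; [:: 2; 38; 41; 48; 51]; [:: 2; 39; 44; 45; 50];
     [:: 2; 40; 43; 46; 49]; [:: 3; 5; 11; 16; 18]; [:: 3; 6; 12; 15; 17]; [:: 3; 7; 9; 14; 20];
     [:: 3; 8; 10; 13; 19]; [:: 3; 21; 27; 32; 34]; [:: 3; 22; 28; 31; 33]; [:: 3; 23; 25; 30; 36];
     [:: 3; 24; 26; 29; 35]; [:: 3; 37; 43; 48; 50]; [:: 3; 38; 44; 47; 49]; [:: 3; 39; 41; 46; 52];
     [:: 3; 40; 42; 45; 51]; [:: 4; 5; 12; 14; 19]; [:: 4; 6; 11; 13; 20]; [:: 4; 7; 10; 16; 17];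
     [:: 4; 8; 9; 15; 18]; [:: 4; 21; 28; 30; 35]; [:: 4; 22; 27; 29; 36]; [:: 4; 23; 26; 32; 33];
     [:: 4; 24; 25; 31; 34]; [:: 4; 37; 44; 46; 51]; [:: 4; 38; 43; 45; 52]; [:: 4; 39; 42; 48; 49];
     [:: 4; 40; 41; 47; 50]; [:: 5; 21; 37]; [:: 5; 22; 40]; [:: 5; 23; 38];
     [:: 5; 24; 39]; [:: 5; 25; 49]; [:: 5; 26; 52]; [:: 5; 27; 50];
     [:: 5; 28; 51]; [:: 5; 29; 41]; [:: 5; 30; 44]; [:: 5; 31; 42];
     [:: 5; 32; 43]; [:: 5; 33; 45]; [:: 5; 34; 48]; [:: 5; 35; 46];
     [:: 5; 36; 47]; [:: 6; 21; 39]; [:: 6; 22; 38]; [:: 6; 23; 40];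
     [:: 6; 24; 37]; [:: 6; 25; 51]; [:: 6; 26; 50]; [:: 6; 27; 52];
     [:: 6; 28; 49]; [:: 6; 29; 43]; [:: 6; 30; 42]; [:: 6; 31; 44];
     [:: 6; 32; 41]; [:: 6; 33; 47]; [:: 6; 34; 46]; [:: 6; 35; 48];
     [:: 6; 36; 45]; [:: 7; 21; 40]; [:: 7; 22; 37]; [:: 7; 23; 39];
     [:: 7; 24; 38]; [:: 7; 25; 52]; [:: 7; 26; 49]; [:: 7; 27; 51];
     [:: 7; 28; 50]; [:: 7; 29; 44]; [:: 7; 30; 41]; [:: 7; 31; 43];
     [:: 7; 32; 42]; [:: 7; 33; 48]; [:: 7; 34; 45]; [:: 7; 35; 47];
     [:: 7; 36; 46]; [:: 8; 21; 38]; [:: 8; 22; 39]; [:: 8; 23; 37];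
     [:: 8; 24; 40]; [:: 8; 25; 50]; [:: 8; 26; 51]; [:: 8; 27; 49];
     [:: 8; 28; 52]; [:: 8; 29; 42]; [:: 8; 30; 43]; [:: 8; 31; 41];
     [:: 8; 32; 44]; [:: 8; 33; 46]; [:: 8; 34; 47]; [:: 8; 35; 45];
     [:: 8; 36; 48]; [:: 9; 21; 45]; [:: 9; 22; 48]; [:: 9; 23; 46];
     [:: 9; 24; 47]; [:: 9; 25; 41]; [:: 9; 26; 44]; [:: 9; 27; 42];
     [:: 9; 28; 43]; [:: 9; 29; 49]; [:: 9; 30; 52]; [:: 9; 31; 50];
     [:: 9; 32; 51]; [:: 9; 33; 37]; [:: 9; 34; 40]; [:: 9; 35; 38];
     [:: 9; 36; 39]; [:: 10; 21; 47]; [:: 10; 22; 46]; [:: 10; 23; 48];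
     [:: 10; 24; 45]; [:: 10; 25; 43]; [:: 10; 26; 42]; [:: 10; 27; 44];
     [:: 10; 28; 41]; [:: 10; 29; 51]; [:: 10; 30; 50]; [:: 10; 31; 52];
     [:: 10; 32; 49]; [:: 10; 33; 39]; [:: 10; 34; 38]; [:: 10; 35; 40];
     [:: 10; 36; 37]; [:: 11; 21; 48]; [:: 11; 22; 45]; [:: 11; 23; 47];
     [:: 11; 24; 46]; [:: 11; 25; 44]; [:: 11; 26; 41]; [:: 11; 27; 43];
     [:: 11; 28; 42]; [:: 11; 29; 52]; [:: 11; 30; 49]; [:: 11; 31; 51];
     [:: 11; 32; 50]; [:: 11; 33; 40]; [:: 11; 34; 37]; [:: 11; 35; 39];
     [:: 11; 36; 38]; [:: 12; 21; 46]; [:: 12; 22; 47]; [:: 12; 23; 45];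
     [:: 12; 24; 48]; [:: 12; 25; 42]; [:: 12; 26; 43]; [:: 12; 27; 41];
     [:: 12; 28; 44]; [:: 12; 29; 50]; [:: 12; 30; 51]; [:: 12; 31; 49];
     [:: 12; 32; 52]; [:: 12; 33; 38]; [:: 12; 34; 39]; [:: 12; 35; 37];
     [:: 12; 36; 40]; [:: 13; 21; 49]; [:: 13; 22; 52]; [:: 13; 23; 50];
     [:: 13; 24; 51]; [:: 13; 25; 37]; [:: 13; 26; 40]; [:: 13; 27; 38];
     [:: 13; 28; 39]; [:: 13; 29; 45]; [:: 13; 30; 48]; [:: 13; 31; 46];
     [:: 13; 32; 47]; [:: 13; 33; 41]; [:: 13; 34; 44]; [:: 13; 35; 42];
     [:: 13; 36; 43]; [:: 14; 21; 51]; [:: 14; 22; 50]; [:: 14; 23; 52];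
     [:: 14; 24; 49]; [:: 14; 25; 39]; [:: 14; 26; 38]; [:: 14; 27; 40];
     [:: 14; 28; 37]; [:: 14; 29; 47]; [:: 14; 30; 46]; [:: 14; 31; 48];
     [:: 14; 32; 45]; [:: 14; 33; 43]; [:: 14; 34; 42]; [:: 14; 35; 44];
     [:: 14; 36; 41]; [:: 15; 21; 52]; [:: 15; 22; 49]; [:: 15; 23; 51];
     [:: 15; 24; 50]; [:: 15; 25; 40]; [:: 15; 26; 37]; [:: 15; 27; 39];
     [:: 15; 28; 38]; [:: 15; 29; 48]; [:: 15; 30; 45]; [:: 15; 31; 47];
     [:: 15; 32; 46]; [:: 15; 33; 44]; [:: 15; 34; 41]; [:: 15; 35; 43];
     [:: 15; 36; 42]; [:: 16; 21; 50]; [:: 16; 22; 51]; [:: 16; 23; 49];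
     [:: 16; 24; 52]; [:: 16; 25; 38]; [:: 16; 26; 39]; [:: 16; 27; 37];
     [:: 16; 28; 40]; [:: 16; 29; 46]; [:: 16; 30; 47]; [:: 16; 31; 45];
     [:: 16; 32; 48]; [:: 16; 33; 42]; [:: 16; 34; 43]; [:: 16; 35; 41];
     [:: 16; 36; 44]; [:: 17; 21; 41]; [:: 17; 22; 44]; [:: 17; 23; 42];
     [:: 17; 24; 43]; [:: 17; 25; 45]; [:: 17; 26; 48]; [:: 17; 27; 46];
     [:: 17; 28; 47]; [:: 17; 29; 37]; [:: 17; 30; 40]; [:: 17; 31; 38];
     [:: 17; 32; 39]; [:: 17; 33; 49]; [:: 17; 34; 52]; [:: 17; 35; 50];
     [:: 17; 36; 51]; [:: 18; 21; 43]; [:: 18; 22; 42]; [:: 18; 23; 44];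
     [:: 18; 24; 41]; [:: 18; 25; 47]; [:: 18; 26; 46]; [:: 18; 27; 48];
     [:: 18; 28; 45]; [:: 18; 29; 39]; [:: 18; 30; 38]; [:: 18; 31; 40];
     [:: 18; 32; 37]; [:: 18; 33; 51]; [:: 18; 34; 50]; [:: 18; 35; 52];
     [:: 18; 36; 49]; [:: 19; 21; 44]; [:: 19; 22; 41]; [:: 19; 23; 43];
     [:: 19; 24; 42]; [:: 19; 25; 48]; [:: 19; 26; 45]; [:: 19; 27; 47];
     [:: 19; 28; 46]; [:: 19; 29; 40]; [:: 19; 30; 37]; [:: 19; 31; 39];
     [:: 19; 32; 38]; [:: 19; 33; 52]; [:: 19; 34; 49]; [:: 19; 35; 51];
     [:: 19; 36; 50]; [:: 20; 21; 42]; [:: 20; 22; 43]; [:: 20; 23; 41];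
     [:: 20; 24; 44]; [:: 20; 25; 46]; [:: 20; 26; 47]; [:: 20; 27; 45];
     [:: 20; 28; 48]; [:: 20; 29; 38]; [:: 20; 30; 39]; [:: 20; 31; 37];
     [:: 20; 32; 40]; [:: 20; 33; 50]; [:: 20; 34; 51]; [:: 20; 35; 49];
     [:: 20; 36; 52]].

(* The traces of the 83 planes of PG(3,4) other than the two removed ones:
   the 3 planes through the common line (21 points) and 80 others (13 points). *)
Definition flats53 : seq (seq nat) :=
  [:: [:: 0; 1; 2; 3; 4; 5; 6; 7; 8; 9; 10; 11; 12; 13; 14; 15; 16; 17; 18; 19; 20];
     [:: 0; 1; 2; 3; 4; 21; 22; 23; 24; 25; 26; 27; 28; 29; 30; 31; 32; 33; 34; 35; 36];
     [:: 0; 1; 2; 3; 4; 37; 38; 39; 40; 41; 42; 43; 44; 45; 46; 47; 48; 49; 50; 51; 52];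
     [:: 0; 5; 6; 7; 8; 21; 22; 23; 24; 37; 38; 39; 40];
     [:: 0; 5; 6; 7; 8; 25; 26; 27; 28; 49; 50; 51; 52];
     [:: 0; 5; 6; 7; 8; 29; 30; 31; 32; 41; 42; 43; 44];
     [:: 0; 5; 6; 7; 8; 33; 34; 35; 36; 45; 46; 47; 48];
     [:: 0; 9; 10; 11; 12; 21; 22; 23; 24; 45; 46; 47; 48];
     [:: 0; 9; 10; 11; 12; 25; 26; 27; 28; 41; 42; 43; 44];
     [:: 0; 9; 10; 11; 12; 29; 30; 31; 32; 49; 50; 51; 52];
     [:: 0; 9; 10; 11; 12; 33; 34; 35; 36; 37; 38; 39; 40];
     [:: 0; 13; 14; 15; 16; 21; 22; 23; 24; 49; 50; 51; 52];
     [:: 0; 13; 14; 15; 16; 25; 26; 27; 28; 37; 38; 39; 40];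
     [:: 0; 13; 14; 15; 16; 29; 30; 31; 32; 45; 46; 47; 48];
     [:: 0; 13; 14; 15; 16; 33; 34; 35; 36; 41; 42; 43; 44];
     [:: 0; 17; 18; 19; 20; 21; 22; 23; 24; 41; 42; 43; 44];
     [:: 0; 17; 18; 19; 20; 25; 26; 27; 28; 45; 46; 47; 48];
     [:: 0; 17; 18; 19; 20; 29; 30; 31; 32; 37; 38; 39; 40];
     [:: 0; 17; 18; 19; 20; 33; 34; 35; 36; 49; 50; 51; 52];
     [:: 1; 5; 9; 13; 17; 21; 25; 29; 33; 37; 41; 45; 49];
     [:: 1; 5; 9; 13; 17; 22; 26; 30; 34; 40; 44; 48; 52];
     [:: 1; 5; 9; 13; 17; 23; 27; 31; 35; 38; 42; 46; 50];
     [:: 1; 5; 9; 13; 17; 24; 28; 32; 36; 39; 43; 47; 51];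
     [:: 1; 6; 10; 14; 18; 21; 25; 29; 33; 39; 43; 47; 51];
     [:: 1; 6; 10; 14; 18; 22; 26; 30; 34; 38; 42; 46; 50];
     [:: 1; 6; 10; 14; 18; 23; 27; 31; 35; 40; 44; 48; 52];
     [:: 1; 6; 10; 14; 18; 24; 28; 32; 36; 37; 41; 45; 49];
     [:: 1; 7; 11; 15; 19; 21; 25; 29; 33; 40; 44; 48; 52];
     [:: 1; 7; 11; 15; 19; 22; 26; 30; 34; 37; 41; 45; 49];
     [:: 1; 7; 11; 15; 19; 23; 27; 31; 35; 39; 43; 47; 51];
     [:: 1; 7; 11; 15; 19; 24; 28; 32; 36; 38; 42; 46; 50];
     [:: 1; 8; 12; 16; 20; 21; 25; 29; 33; 38; 42; 46; 50];
     [:: 1; 8; 12; 16; 20; 22; 26; 30; 34; 39; 43; 47; 51];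
     [:: 1; 8; 12; 16; 20; 23; 27; 31; 35; 37; 41; 45; 49];
     [:: 1; 8; 12; 16; 20; 24; 28; 32; 36; 40; 44; 48; 52];
     [:: 2; 5; 10; 15; 20; 21; 26; 31; 36; 37; 42; 47; 52];
     [:: 2; 5; 10; 15; 20; 22; 25; 32; 35; 40; 43; 46; 49];
     [:: 2; 5; 10; 15; 20; 23; 28; 29; 34; 38; 41; 48; 51];
     [:: 2; 5; 10; 15; 20; 24; 27; 30; 33; 39; 44; 45; 50];
     [:: 2; 6; 9; 16; 19; 21; 26; 31; 36; 39; 44; 45; 50];
     [:: 2; 6; 9; 16; 19; 22; 25; 32; 35; 38; 41; 48; 51];
     [:: 2; 6; 9; 16; 19; 23; 28; 29; 34; 40; 43; 46; 49];
     [:: 2; 6; 9; 16; 19; 24; 27; 30; 33; 37; 42; 47; 52];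
     [:: 2; 7; 12; 13; 18; 21; 26; 31; 36; 40; 43; 46; 49];
     [:: 2; 7; 12; 13; 18; 22; 25; 32; 35; 37; 42; 47; 52];
     [:: 2; 7; 12; 13; 18; 23; 28; 29; 34; 39; 44; 45; 50];
     [:: 2; 7; 12; 13; 18; 24; 27; 30; 33; 38; 41; 48; 51];
     [:: 2; 8; 11; 14; 17; 21; 26; 31; 36; 38; 41; 48; 51];
     [:: 2; 8; 11; 14; 17; 22; 25; 32; 35; 39; 44; 45; 50];
     [:: 2; 8; 11; 14; 17; 23; 28; 29; 34; 37; 42; 47; 52];
     [:: 2; 8; 11; 14; 17; 24; 27; 30; 33; 40; 43; 46; 49];
     [:: 3; 5; 11; 16; 18; 21; 27; 32; 34; 37; 43; 48; 50];
     [:: 3; 5; 11; 16; 18; 22; 28; 31; 33; 40; 42; 45; 51];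
     [:: 3; 5; 11; 16; 18; 23; 25; 30; 36; 38; 44; 47; 49];
     [:: 3; 5; 11; 16; 18; 24; 26; 29; 35; 39; 41; 46; 52];
     [:: 3; 6; 12; 15; 17; 21; 27; 32; 34; 39; 41; 46; 52];
     [:: 3; 6; 12; 15; 17; 22; 28; 31; 33; 38; 44; 47; 49];
     [:: 3; 6; 12; 15; 17; 23; 25; 30; 36; 40; 42; 45; 51];
     [:: 3; 6; 12; 15; 17; 24; 26; 29; 35; 37; 43; 48; 50];
     [:: 3; 7; 9; 14; 20; 21; 27; 32; 34; 40; 42; 45; 51];
     [:: 3; 7; 9; 14; 20; 22; 28; 31; 33; 37; 43; 48; 50];
     [:: 3; 7; 9; 14; 20; 23; 25; 30; 36; 39; 41; 46; 52];
     [:: 3; 7; 9; 14; 20; 24; 26; 29; 35; 38; 44; 47; 49];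
     [:: 3; 8; 10; 13; 19; 21; 27; 32; 34; 38; 44; 47; 49];
     [:: 3; 8; 10; 13; 19; 22; 28; 31; 33; 39; 41; 46; 52];
     [:: 3; 8; 10; 13; 19; 23; 25; 30; 36; 37; 43; 48; 50];
     [:: 3; 8; 10; 13; 19; 24; 26; 29; 35; 40; 42; 45; 51];
     [:: 4; 5; 12; 14; 19; 21; 28; 30; 35; 37; 44; 46; 51];
     [:: 4; 5; 12; 14; 19; 22; 27; 29; 36; 40; 41; 47; 50];
     [:: 4; 5; 12; 14; 19; 23; 26; 32; 33; 38; 43; 45; 52];
     [:: 4; 5; 12; 14; 19; 24; 25; 31; 34; 39; 42; 48; 49];
     [:: 4; 6; 11; 13; 20; 21; 28; 30; 35; 39; 42; 48; 49];
     [:: 4; 6; 11; 13; 20; 22; 27; 29; 36; 38; 43; 45; 52];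
     [:: 4; 6; 11; 13; 20; 23; 26; 32; 33; 40; 41; 47; 50];
     [:: 4; 6; 11; 13; 20; 24; 25; 31; 34; 37; 44; 46; 51];
     [:: 4; 7; 10; 16; 17; 21; 28; 30; 35; 40; 41; 47; 50];
     [:: 4; 7; 10; 16; 17; 22; 27; 29; 36; 37; 44; 46; 51];
     [:: 4; 7; 10; 16; 17; 23; 26; 32; 33; 39; 42; 48; 49];
     [:: 4; 7; 10; 16; 17; 24; 25; 31; 34; 38; 43; 45; 52];
     [:: 4; 8; 9; 15; 18; 21; 28; 30; 35; 38; 43; 45; 52];
     [:: 4; 8; 9; 15; 18; 22; 27; 29; 36; 39; 42; 48; 49];
     [:: 4; 8; 9; 15; 18; 23; 26; 32; 33; 37; 44; 46; 51];
     [:: 4; 8; 9; 15; 18; 24; 25; 31; 34; 40; 41; 47; 50]].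

Definition spanning4 : seq nat := [:: 17; 25; 41; 47].

Lemma blocks53_bounded : all (bounded 53) blocks53.
Proof. by vm_compute. Qed.
Lemma blocks53_sizes : blocks_ok 53 blocks53 (fun k => k \in [:: 3; 5]).
Proof. by vm_compute. Qed.
Lemma blocks53_pairs : pairs_ok 53 blocks53.
Proof. by vm_compute. Qed.
Lemma flats53_proper : all (proper_flat_list 53 blocks53) flats53.
Proof. by vm_compute. Qed.
Lemma flats53_cover : covers 53 blocks53 flats53.
Proof. by vm_compute. Qed.
Lemma spanning4_spans : contains_range 53 (iter 3 (span_step blocks53) spanning4).
Proof. by vm_compute. Qed.

Theorem proposition3p10 :
  exists B : {set {set 'I_53}},
    is_PBD (fun k => k \in [:: 3; 5]) B /\ has_dimension B 3.
Proof.
exists (design 53 blocks53); split; first exact: design_PBD blocks53_sizes blocks53_pairs.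
apply: (has_dimension_of (S0 := points 53 spanning4)).
- by rewrite card_ord.
- exact: (design_three_sets blocks53_bounded blocks53_pairs flats53_proper flats53_cover).
- by rewrite card_points.
- exact: (spanning_list blocks53_bounded blocks53_pairs spanning4_spans).
Qed.
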